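(* Let $n_0$ be a positive integer and let $X$ be a semiprime complex Banach algebra with identity. Let $\phi,\psi:X^2\to[0,\infty)$ and $f:X\to X$ with $f(0)=0$ satisfy $$\|f(xyx)-f(x)yx-xf(y)x-xyf(x)\|\le\psi(x,y),$$ $$\|f(2\mu x+\mu y)+f(\mu x+2\mu y)-\mu[f(3x)+f(3y)]\|\le\phi(x,y)$$ for all $x,y\in X$ and all $\mu\in\mathbb{T}^1_{n_0}$. Assume there exists $0<L<1$ such that for all $x,y\in X$ $$\tfrac12\phi(2x,2y)\le L\phi(x,y),\qquad \lim_{k\to\infty}8^{-k}\psi(2^kx,2^ky)=0,\qquad \lim_{k\to\infty}4^{-k}\psi(2^kx,y)=0.$$ Then $f$ is a linear derivation.
   Context: $\mathbb{T}^1_{n_0}:=\{e^{i\theta}: 0\le\theta\le 2\pi/n_0\}$. An algebra $X$ is semiprime if $aXa=\{0\}$ for some $a\in X$ implies $a=0$. A linear derivation is a $\mathbb{C}$-linear map $D:X\to X$ with $D(xy)=D(x)y+xD(y)$ for all $x,y\in X$. *)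

From HB Require Import structures.
From mathcomp Require Import all_boot all_order all_algebra.
From mathcomp Require Import all_classical all_reals all_analysis.
From mathcomp Require Import complex.
Set Implicit Arguments. Unset Strict Implicit. Unset Printing Implicit Defensive.
Import Order.TTheory GRing.Theory Num.Theory.
Import numFieldNormedType.Exports.
Local Open Scope ring_scope.

(* Banach algebra with identity over a numeric field K: a complete normed
   K-module X equipped with an associative, K-bilinear multiplication with a
   (nonzero) identity element, whose norm is submultiplicative.
   (The multiplication is given as a mixin on top of CompleteNormedModule,
   because Hierarchy-Builder does not accept a join of GRing.Algebra with
   NormedModule.) *)
HB.mixin Record CompleteNormedModule_isBanachAlgebra (K : numFieldType) X
  of CompleteNormedModule K X := {
  bamul : X -> X -> X;
  baone : X;
  bamulA : forall x y z : X, bamul x (bamul y z) = bamul (bamul x y) z;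
  bamul1l : forall x : X, bamul baone x = x;
  bamul1r : forall x : X, bamul x baone = x;
  bamulDl : forall x y z : X, bamul (x + y) z = bamul x z + bamul y z;
  bamulDr : forall x y z : X, bamul x (y + z) = bamul x y + bamul x z;
  bamulZl : forall (a : K) (x y : X), bamul (a *: x) y = a *: bamul x y;
  bamulZr : forall (a : K) (x y : X), bamul x (a *: y) = a *: bamul x y;
  baone_neq0 : baone != 0;
  banormM : forall x y : X, `|bamul x y| <= `|x| * `|y|
}.

#[short(type="banachAlgType")]
HB.structure Definition BanachAlgebra (K : numFieldType) :=
  { X of CompleteNormedModule_isBanachAlgebra K X & CompleteNormedModule K X }.

Notation "x ** y" := (bamul x y) (at level 40, left associativity) : ring_scope.

Definition semiprime (K : numFieldType) (X : banachAlgType K) : Prop :=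
  forall a : X, (forall x : X, a ** x ** a = 0) -> a = 0.

Definition circle_arc (R : realType) (n0 : nat) : set R[i] :=
  [set mu | exists theta : R,
     0 <= theta <= 2 * pi / n0%:R /\ mu = (cos theta +i* sin theta)%C].

Definition linear_derivation (K : numFieldType) (X : banachAlgType K)
  (D : X -> X) : Prop :=
  (forall (a : K) (x y : X), D (a *: x + y) = a *: D x + D y) /\
  (forall x y : X, D (x ** y) = D x ** y + x ** D y).

(* Taking mu = 1, the decay of 4^-k psi(2^k x, y) shows that f(z) is the limit
   of 4^-k f(4^k z) - c_k z - z c_k with c_k = 2^-k f(2^k 1). These terms cancel
   in f(2x+y) + f(x+2y) - f(3x) - f(3y), while phi(4^k x, 4^k y) grows at most
   like (4 L^2)^k, so f satisfies that Jensen-type equation exactly and is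
   additive. The contraction of phi then forces f(mu x) = mu f(x) on the arc;
   powers, inverses and sums of arc points (cos t = (e^it + e^-it)/2) reach
   every complex scalar, so f is C-linear. Linearity turns the psi bound into
   the identity f(xyx) = f(x)yx + xf(y)x + xyf(x), and by Bresar's theorem a
   Jordan triple derivation of a semiprime algebra without 2-torsion is a
   derivation: Herstein's identities show that d(a,b) = f(ab) - f(a)b - af(b)
   annihilates all commutators, hence is central and nilpotent, hence zero. *)

From HB Require Import structures.
From mathcomp Require Import all_boot all_order all_algebra.
From mathcomp Require Import all_classical all_reals all_analysis.
From mathcomp Require Import complex.
From mathcomp Require Import ring lra.
Import Order.TTheory GRing.Theory Num.Theory.
Import numFieldNormedType.Exports.
Set Implicit Arguments. Unset Strict Implicit. Unset Printing Implicit Defensive.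
Local Open Scope ring_scope.

Inductive zexpr := ZAtom of nat | ZAdd of zexpr & zexpr | ZOpp of zexpr | ZZero.

Section AbelianGroupReflection.
Variable V : zmodType.

Fixpoint zeval (env : seq V) (e : zexpr) : V :=
  match e with
  | ZAtom n => nth 0 env n
  | ZAdd a b => zeval env a + zeval env b
  | ZOpp a => - zeval env a
  | ZZero => 0
  end.

Fixpoint zcoef (e : zexpr) (i : nat) : int :=
  match e with
  | ZAtom n => (n == i)%:Z
  | ZAdd a b => zcoef a i + zcoef b i
  | ZOpp a => - zcoef a i
  | ZZero => 0
  end.

Lemma zeval_sum env e :
  zeval env e = \sum_(i < size env) nth 0 env i *~ zcoef e i.
Proof.
elim: e => [n|a iha b ihb|a iha|] /=.
- have [n_lt|n_ge] := ltnP n (size env); last first.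
    rewrite nth_default // big1 // => j _.
    by rewrite gtn_eqF ?mulr0z // (leq_trans (ltn_ord j)).
  rewrite (bigD1 (Ordinal n_lt)) //= eqxx mulr1z big1 ?addr0 // => j.
  by rewrite -val_eqE eq_sym /= => /negbTE ->.
- by rewrite iha ihb -big_split; apply: eq_bigr => i _; rewrite mulrzDr.
- by rewrite iha -sumrN; apply: eq_bigr => i _; rewrite mulrNz.
- by rewrite big1 // => i _; rewrite mulr0z.
Qed.

Lemma zeval_eq env e1 e2 n : size env = n ->
  all (fun i => zcoef e1 i == zcoef e2 i) (iota 0 n) ->
  zeval env e1 = zeval env e2.
Proof.
move=> <- /allP coefE; rewrite !zeval_sum; apply: eq_bigr => i _.
by rewrite (eqP (coefE i _)) // mem_iota /=.
Qed.
End AbelianGroupReflection.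

(* Atoms are compared up to unification: the same term may be reached
   through syntactically different structure instances. *)
Ltac zindex x l :=
  match l with
  | ?y :: _ => let _ := constr:(ltac:(unify x y; exact tt) : unit) in constr:(0%N)
  | _ :: ?l' => let n := zindex x l' in constr:(n.+1)
  end.

Ltac zatoms t l :=
  match t with
  | ?a + ?b => let l' := zatoms a l in zatoms b l'
  | - ?a => zatoms a l
  | 0 => l
  | _ => match l with
         | _ => let _ := zindex t l in l
         | _ => constr:(t :: l)
         end
  end.

Ltac zsize l :=
  match l with
  | nil => constr:(0%N)
  | _ :: ?l' => let n := zsize l' in constr:(n.+1)
  end.

Ltac zreify t l :=
  match t with
  | ?a + ?b =>
      let ra := zreify a l in let rb := zreify b l in constr:(ZAdd ra rb)
  | - ?a => let ra := zreify a l in constr:(ZOpp ra)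
  | 0 => constr:(ZZero)
  | _ => let n := zindex t l in constr:(ZAtom n)
  end.

(* Decides equalities between Z-linear combinations of arbitrary atoms. *)
Ltac abel :=
  match goal with
  | |- @eq ?V ?lhs ?rhs =>
    let l0 := zatoms lhs (@nil V) in
    let l := zatoms rhs l0 in
    let e1 := zreify lhs l in
    let e2 := zreify rhs l in
    change (@zeval V l e1 = @zeval V l e2);
    let n := zsize l in
    apply: (@zeval_eq V l e1 e2 n); [reflexivity | vm_compute; reflexivity]
  end.

Lemma eq_using (V : zmodType) (l r g1 g2 : V) : l = r -> g1 - l + r = g2 -> g1 = g2.
Proof. by move=> ->; rewrite subrK. Qed.

Ltac add_eq h := move: (h) => /eq_using; apply.

Section NatDivision.
Variables (K : numFieldType) (V : lmodType K).

Lemma natmul_eq0 n (v : V) : (0 < n)%N -> v *+ n = 0 -> v = 0.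
Proof.
move=> n_gt0 /eqP; rewrite -scaler_nat scaler_eq0 pnatr_eq0.
by rewrite gtn_eqF //= => /eqP.
Qed.

Lemma natmul_onto n (v : V) : (0 < n)%N -> exists w : V, v = w *+ n.
Proof.
move=> n_gt0; exists (n%:R^-1 *: v).
by rewrite -scaler_nat scalerA mulfV ?scale1r // pnatr_eq0 gtn_eqF.
Qed.

Lemma double_eq0 (v : V) : v + v = 0 -> v = 0.
Proof. by rewrite -mulr2n; apply: natmul_eq0. Qed.

End NatDivision.

(** * Jordan triple derivations of semiprime algebras *)

Section BanachAlgebraRing.
Variables (K : numFieldType) (X : banachAlgType K).
Implicit Types x y z : X.

Lemma bamul0l x : 0 ** x = 0 :> X.
Proof. by apply: (@addrI _ (0 ** x)); rewrite -bamulDl !addr0. Qed.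

Lemma bamul0r x : x ** 0 = 0 :> X.
Proof. by apply: (@addrI _ (x ** 0)); rewrite -bamulDr !addr0. Qed.

Lemma bamulNl x y : (- x) ** y = - (x ** y).
Proof. by apply/eqP; rewrite -subr_eq0 opprK -bamulDl addNr bamul0l. Qed.

Lemma bamulNr x y : x ** (- y) = - (x ** y).
Proof. by apply/eqP; rewrite -subr_eq0 opprK -bamulDr addNr bamul0r. Qed.

Lemma bamulBl x y z : (x - y) ** z = x ** z - y ** z.
Proof. by rewrite bamulDl bamulNl. Qed.

Lemma bamulBr x y z : z ** (x - y) = z ** x - z ** y.
Proof. by rewrite bamulDr bamulNr. Qed.

End BanachAlgebraRing.

Ltac bamul_expand :=
  rewrite ?bamulDr ?bamulDl ?bamulNr ?bamulNl ?bamulA ?bamul1l ?bamul1r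
          ?bamul0l ?bamul0r ?opprK ?addr0 ?add0r ?oppr0.

Ltac bamul_abel := bamul_expand; abel.

Section Semiprime.
Variables (K : numFieldType) (X : banachAlgType K).
Hypothesis sp : semiprime X.
Implicit Types a b p q u x : X.

Lemma semiprime_skew a b :
  (forall u, a ** u ** b + b ** u ** a = 0) -> forall u, a ** u ** b = 0.
Proof.
move=> skew; have swap l u : l ** a ** u ** b = - (l ** b ** u ** a).
  apply/eqP; rewrite -subr_eq0 opprK.
  by rewrite -!bamulA -bamulDr !bamulA skew bamul0r.
(* (a u b) y (a u b) = - (a u b) y (a u b) by three swaps. *)
move=> u; apply: sp => y; apply: double_eq0.
have e1 := swap baone (u ** b ** y ** a ** u).
have e2 := swap baone u.
have e3 := swap (b ** u) (y ** a ** u).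
rewrite ?bamulA ?bamul1l in e1 e2 e3 *.
by rewrite {1}e1 e2 !bamulNl e3 opprK addNr.
Qed.

Lemma semiprime_factorl x p q : x = p ** q -> (forall u, q ** u ** x = 0) -> x = 0.
Proof. by move=> xE qx0; apply: sp => u; rewrite {1}xE -!bamulA (bamulA q) qx0 !bamul0r. Qed.

Lemma semiprime_factorr x p q : x = p ** q -> (forall u, x ** u ** p = 0) -> x = 0.
Proof. by move=> xE xp0; apply: sp => u; rewrite {2}xE !bamulA xp0 bamul0l. Qed.

Lemma semiprime_central_nilpotent u :
  (forall x, u ** x = x ** u) -> u ** u ** u = 0 -> u = 0.
Proof.
move=> uC u3; have u2C x : u ** u ** x = x ** (u ** u).
  by rewrite -bamulA uC bamulA uC -bamulA.
have u2 : u ** u = 0 by apply: sp => x; rewrite -u2C !bamulA u3 !bamul0l.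
by apply: sp => x; rewrite -bamulA -uC bamulA u2 bamul0l.
Qed.

End Semiprime.

Section JordanTripleDerivation.
Variables (K : numFieldType) (X : banachAlgType K) (D : X -> X).
Hypothesis sp : semiprime X.
Hypothesis DD : forall x y, D (x + y) = D x + D y.
Hypothesis D_triple : forall x y,
  D (x ** y ** x) = D x ** y ** x + x ** D y ** x + x ** y ** D x.
Implicit Types a b c d r s u x y : X.

Lemma D0 : D 0 = 0.
Proof. by apply: (@addrI _ (D 0)); rewrite -DD !addr0. Qed.

Lemma DN x : D (- x) = - D x.
Proof. by apply/eqP; rewrite -subr_eq0 opprK -DD addNr D0. Qed.

Ltac D_expand := rewrite ?DD ?DN ?D0; bamul_expand; rewrite ?DD ?DN ?D0.

Lemma D1 : D baone = 0.
Proof.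
apply: double_eq0; add_eq (esym (D_triple baone baone)).
bamul_abel.
Qed.

Lemma D_square x : D (x ** x) = D x ** x + x ** D x.
Proof. by have := D_triple x baone; rewrite !bamul1r D1 bamul0r bamul0l addr0. Qed.

Lemma D_jordan a b : D (a ** b + b ** a) = D a ** b + a ** D b + D b ** a + b ** D a.
Proof.
have := D_square (a + b); D_expand => hab.
D_expand; add_eq hab; rewrite !D_square; bamul_abel.
Qed.

Lemma D_triple_sym a y c : D (a ** y ** c + c ** y ** a) =
  D a ** y ** c + a ** D y ** c + a ** y ** D c + D c ** y ** a + c ** D y ** a + c ** y ** D a.
Proof.
have := D_triple (a + c) y; D_expand => hac.
D_expand; add_eq hac; rewrite !D_triple; bamul_abel.
Qed.

(* Locked, so that rewriting with distributivity treats them as atoms. *)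
Definition dev a b := locked (D (a ** b) - D a ** b - a ** D b).
Definition comm a b := locked (a ** b - b ** a).

Lemma devE a b : dev a b = D (a ** b) - D a ** b - a ** D b.
Proof. by rewrite /dev -lock. Qed.

Lemma commE a b : comm a b = a ** b - b ** a.
Proof. by rewrite /comm -lock. Qed.

Lemma devDl a c b : dev (a + c) b = dev a b + dev c b.
Proof. by rewrite !devE; D_expand; abel. Qed.

Lemma devDr a b d : dev a (b + d) = dev a b + dev a d.
Proof. by rewrite !devE; D_expand; abel. Qed.

Lemma commDl a c b : comm (a + c) b = comm a b + comm c b.
Proof. by rewrite !commE; bamul_abel. Qed.

Lemma commDr a b d : comm a (b + d) = comm a b + comm a d.
Proof. by rewrite !commE; bamul_abel. Qed.

Lemma dev_skew a b : dev a b + dev b a = 0.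
Proof.
have := D_jordan a b; rewrite DD => h.
by rewrite !devE; add_eq h; abel.
Qed.

(* Expand [D (ab r ba + ba r ab)] once as a symmetric triple product and once
   as [D (a (b r b) a) + D (b (a r a) b)]. *)
Lemma dev_comm_sym a b r : dev a b ** r ** comm a b + comm a b ** r ** dev a b = 0.
Proof.
have e1 := D_triple_sym (a ** b) r (b ** a).
have e2 := D_triple a (b ** r ** b); have e3 := D_triple b (a ** r ** a).
have e4 := congr1 (fun t => a ** t ** a) (D_triple b r).
have e5 := congr1 (fun t => b ** t ** b) (D_triple a r).
have e6 := congr1 (fun t => a ** b ** r ** t) (D_jordan a b).
have e7 := congr1 (fun t => t ** r ** (a ** b)) (D_jordan a b).
rewrite !devE !commE; add_eq e1; add_eq (esym e2); add_eq (esym e3).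
add_eq (esym e4); add_eq (esym e5); add_eq e6; add_eq e7.
D_expand; abel.
Qed.

Lemma dev_comm a b r : dev a b ** r ** comm a b = 0.
Proof. exact: (semiprime_skew sp (dev_comm_sym a b)). Qed.

Lemma comm_dev a b r : comm a b ** r ** dev a b = 0.
Proof. by have := dev_comm_sym a b r; rewrite dev_comm add0r. Qed.

Lemma dev_comm_swap a b c r :
  dev a b ** r ** comm c b = - (dev c b ** r) ** comm a b.
Proof.
have := dev_comm (a + c) b r; rewrite devDl commDl; bamul_expand.
by rewrite !dev_comm => h; add_eq h; bamul_abel.
Qed.

Lemma comm_dev_swap a b c r :
  comm c b ** r ** dev a b = - comm a b ** (r ** dev c b).
Proof.
have := comm_dev (a + c) b r; rewrite devDl commDl; bamul_expand.
by rewrite !comm_dev => h; add_eq h; bamul_abel.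
Qed.

Lemma dev_comm_l a b c r : dev a b ** r ** comm c b = 0.
Proof.
apply: (semiprime_factorl sp (dev_comm_swap a b c r)) => u.
by rewrite !bamulA comm_dev !bamul0l.
Qed.

Lemma comm_dev_l a b c r : comm c b ** r ** dev a b = 0.
Proof.
apply: (semiprime_factorr sp (comm_dev_swap a b c r)) => u.
by rewrite bamulNr -[_ ** dev a b ** u]bamulA -bamulA dev_comm bamul0r oppr0.
Qed.

Lemma dev_comm_general a b c d r : dev a b ** r ** comm c d = 0.
Proof.
have swap : dev a b ** r ** comm c d = - (dev a d ** r) ** comm c b.
  have := dev_comm_l a (b + d) c r; rewrite devDr commDr; bamul_expand.
  by rewrite !dev_comm_l => h; add_eq h; bamul_abel.
apply: (semiprime_factorl sp swap) => u.
by rewrite !bamulA comm_dev_l !bamul0l.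
Qed.

Lemma dev_central a b s : dev a b ** s = s ** dev a b.
Proof.
apply/eqP; rewrite -subr_eq0; apply/eqP; apply: sp => r.
have h1 : dev a b ** s ** r ** comm (dev a b) s = 0.
  by rewrite -(bamulA _ s r) dev_comm_general.
have h2 : s ** dev a b ** r ** comm (dev a b) s = 0.
  by rewrite -!bamulA (bamulA (dev a b)) dev_comm_general bamul0r.
by rewrite -[X in _ ** X]commE !bamulBl h1 h2 subrr.
Qed.

Lemma dev_double a b :
  dev a b + dev a b = D (comm a b) - comm (D a) b - comm a (D b).
Proof.
have := dev_skew a b; rewrite !devE !commE => h.
by add_eq h; D_expand; abel.
Qed.

Lemma dev_eq0 a b : dev a b = 0.
Proof.
have uC := dev_central a b; set u := dev a b in uC *.
have u_comm c d : u ** comm c d = 0.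
  by have := dev_comm_general a b c d baone; rewrite bamul1r.
have uw : u ** comm a b = 0 := u_comm a b.
have wu : comm a b ** u = 0 by rewrite -uC.
have u2Dw : u ** u ** D (comm a b) = 0.
  apply: double_eq0.
  have := congr1 (bamul u) (D_jordan u (comm a b)).
  rewrite uw wu addr0 D0 bamul0r !bamulDr !bamulA uw bamul0l addr0.
  rewrite (uC (D u)) -(bamulA (D u)) uw bamul0r add0r.
  by rewrite -(uC (u ** D _)) bamulA => <-.
apply: (semiprime_central_nilpotent sp uC); apply: double_eq0.
rewrite -bamulDr dev_double !bamulBr u2Dw -!(bamulA u u) !u_comm.
by rewrite !bamul0r !subr0.
Qed.

Lemma jordan_triple_derivation x y : D (x ** y) = D x ** y + x ** D y.
Proof. by apply/eqP; rewrite -subr_eq0 opprD addrA -devE dev_eq0. Qed.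

End JordanTripleDerivation.

(** * A Jensen-type functional equation *)
Section JensenAdditive.
Variables (K : numFieldType) (V W : lmodType K) (f : V -> W).
Hypothesis f0 : f 0 = 0.
Hypothesis fE : forall x y,
  f (x + x + y) + f (x + y + y) = f (x + x + x) + f (y + y + y).

Lemma jensen_split u : f u = f (u + u) + f (- u).
Proof.
have [v ->] := natmul_onto u (isT : (0 < 3)%N).
have := fE (v + v) (- v); rewrite !mulrS mulr0n addr0.
have -> : v + v + (v + v) + - v = v + (v + v) by abel.
have -> : v + v + - v + - v = 0 by abel.
have -> : v + v + (v + v) + (v + v) = v + (v + v) + (v + (v + v)) by abel.
by rewrite -!opprD addrA f0 addr0.
Qed.

Lemma jensenN u : f (- u) = - f u.
Proof.
have [w ->] := natmul_onto u (isT : (0 < 2)%N); rewrite !mulrS mulr0n addr0.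
have e1 := jensen_split w; have e2 := jensen_split (- w).
rewrite opprK -opprD in e2.
by apply/eqP; rewrite -subr_eq0 opprK; apply/eqP; add_eq (esym e1); add_eq (esym e2); abel.
Qed.

Lemma jensen_double u : f (u + u) = f u + f u.
Proof. by rewrite {2}(jensen_split u) jensenN; abel. Qed.

Lemma jensen_triple u : f (u + u + u) = f u + f u + f u.
Proof. by have := fE u 0; rewrite !addr0 f0 addr0 jensen_double => <-. Qed.

Lemma jensenD x y : f (x + y) = f x + f y.
Proof.
have e1 := fE (x + y) (- y); have e2 := fE (x + y) (- x); have e3 := fE x y.
have a1 : x + y + (x + y) + - y = x + x + y by abel.
have a2 : x + y + - y + - y = - (y - x) by abel.
have a3 : x + y + (x + y) + - x = x + y + y by abel.
have a4 : x + y + - x + - x = y - x by abel.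
rewrite a1 a2 a3 a4 !jensen_triple !jensenN in e1 e2 e3.
apply/eqP; rewrite -subr_eq0; apply/eqP; apply: (@natmul_eq0 _ _ 6) => //.
rewrite !mulrS mulr0n addr0.
by add_eq (esym e1); add_eq (esym e2); add_eq e3; abel.
Qed.

End JensenAdditive.

(** * Homogeneity from an arc of the unit circle *)

Section Cis.
Variable R : realType.
Implicit Types a b t : R.

Definition cis t : R[i] := (cos t +i* sin t)%C.

Lemma cis0 : cis 0 = 1.
Proof. by rewrite /cis cos0 sin0. Qed.

Lemma cisD a b : cis a * cis b = cis (a + b).
Proof. by rewrite /cis cosD sinD /=; simpc; congr (_ +i* _)%C; ring. Qed.

Lemma cis_neq0 t : cis t != 0.
Proof.
apply/eqP => ct0; have := cisD t (- t).
by rewrite ct0 mul0r subrr cis0 => /eqP; rewrite eq_sym oner_eq0.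
Qed.

Lemma cisN t : cis (- t) = (cis t)^-1.
Proof. by apply/esym/mulr1_eq; rewrite cisD subrr cis0. Qed.

Lemma cis_addN t : cis t + cis (- t) = (2 * cos t)%:C%C.
Proof. by rewrite /cis cosN sinN; simpc; congr (_ +i* _)%C; ring. Qed.

Lemma cis_pihalf : cis (pi / 2) = 'i%C.
Proof. by rewrite /cis cos_pihalf sin_pihalf. Qed.

Lemma cisX t n : cis t ^+ n = cis (n%:R * t).
Proof.
elim: n => [|n IHn]; first by rewrite expr0 mul0r cis0.
by rewrite exprS IHn cisD mulrS mulrDl mul1r.
Qed.

End Cis.

Section ArcHomogeneity.
Variables (R : realType) (n0 : nat) (V W : lmodType R[i]) (f : V -> W).
Hypothesis n0_gt0 : (0 < n0)%N.
Hypothesis fD : forall x y, f (x + y) = f x + f y.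
Hypothesis f_arc : forall mu x, mu \in @circle_arc R n0 -> f (mu *: x) = mu *: f x.

Definition homogeneous_at (a : R[i]) := forall x, f (a *: x) = a *: f x.

Lemma homogeneousM a b :
  homogeneous_at a -> homogeneous_at b -> homogeneous_at (a * b).
Proof. by move=> fa fb x; rewrite -scalerA fa fb scalerA. Qed.

Lemma homogeneousD a b :
  homogeneous_at a -> homogeneous_at b -> homogeneous_at (a + b).
Proof. by move=> fa fb x; rewrite !scalerDl fD fa fb. Qed.

Lemma homogeneousV a : a != 0 -> homogeneous_at a -> homogeneous_at a^-1.
Proof.
move=> a0 fa x; have {2}-> : x = a *: (a^-1 *: x) by rewrite scalerA mulfV ?scale1r.
by rewrite fa scalerA mulVf ?scale1r.
Qed.

Lemma homogeneousX a n : homogeneous_at a -> homogeneous_at (a ^+ n).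
Proof.
move=> fa; elim: n => [|n IHn] x; first by rewrite expr0 !scale1r.
by rewrite exprS; apply: homogeneousM.
Qed.

Lemma homogeneous_nat n : homogeneous_at n%:R.
Proof.
have f0 : f 0 = 0 by apply: (@addrI _ (f 0)); rewrite -fD !addr0.
move=> x; rewrite !scaler_nat; elim: n => [|n IHn]; first by rewrite !mulr0n.
by rewrite !mulrS fD IHn.
Qed.

Lemma homogeneous_cis t : 0 <= t <= pi -> homogeneous_at (cis t).
Proof.
case/andP=> t_ge0 t_lepi; have n0R : 0 < (n0%:R : R) by rewrite ltr0n.
have -> : cis t = cis (t / n0%:R) ^+ n0 by rewrite cisX mulrC mulfVK ?gt_eqF.
apply: homogeneousX => x; apply: f_arc; rewrite inE.
exists (t / n0%:R); split => //; rewrite divr_ge0 ?(ltW n0R) //=.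
rewrite ler_pM2r ?invr_gt0 //; apply: (le_trans t_lepi).
by rewrite ler_peMl ?pi_ge0 // ler1n.
Qed.

(* [r = (cis (acos r) + cis (- acos r)) / 2] for [-1 <= r <= 1]. *)
Lemma homogeneous_unit_real r : -1 <= r <= 1 -> homogeneous_at r%:C%C.
Proof.
move=> r_in; have [acos_in cos_acos] := acos_def r_in.
have fcN : homogeneous_at (cis (- acos r)).
  by rewrite cisN; apply: homogeneousV (cis_neq0 _) (homogeneous_cis acos_in).
have f2r : homogeneous_at (2 * r)%:C%C.
  by rewrite -cos_acos -cis_addN; apply: homogeneousD => //; exact: homogeneous_cis.
have -> : r%:C%C = 2^-1 * (2 * r)%:C%C.
  by rewrite rmorphM rmorph_nat mulrA mulVf ?mul1r // pnatr_eq0.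
by apply: homogeneousM f2r; apply: homogeneousV (homogeneous_nat 2); rewrite pnatr_eq0.
Qed.

Lemma homogeneous_real r : homogeneous_at r%:C%C.
Proof.
set N := Num.Def.archi_bound `|r|.
have rN := archi_boundP (normr_ge0 r); rewrite -/N in rN.
have N_gt0 : (0 : R) < N%:R by apply: le_lt_trans rN.
have N_neq0 : N != 0%N by rewrite -lt0n -(ltr0n R).
have -> : r%:C%C = (N%:R : R[i]) * (r / N%:R)%:C%C.
  by rewrite rmorphM fmorphV rmorph_nat mulrCA mulfV ?mulr1 // pnatr_eq0.
apply: homogeneousM (homogeneous_nat N) _; apply: homogeneous_unit_real.
by rewrite -ler_norml normrM normfV (gtr0_norm N_gt0) ler_pdivrMr // mul1r ltW.
Qed.

Lemma homogeneous a : homogeneous_at a.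
Proof.
rewrite [a]complexE; apply: homogeneousD; first exact: homogeneous_real.
apply: homogeneousM (homogeneous_real _); rewrite -(@cis_pihalf R).
apply: homogeneous_cis.
by rewrite divr_ge0 ?pi_ge0 //= ler_pdivrMr // ler_peMr ?pi_ge0 // ler1n.
Qed.

End ArcHomogeneity.

(** * Stability *)

Local Open Scope classical_set_scope.

Section ComplexNormedModule.
Variables (R : realType) (V : normedModType R[i]).
Implicit Types u v : V.

Definition rnorm v : R := complex.Re `|v|.

Lemma normE v : `|v| = (rnorm v)%:C%C.
Proof. by rewrite /rnorm RRe_real // normr_real. Qed.

Lemma rnorm_ge0 v : 0 <= rnorm v.
Proof. by have := normr_ge0 v; rewrite normE lecR. Qed.

Lemma rnorm_le v (r : R) : `|v| <= r%:C%C -> rnorm v <= r.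
Proof. by rewrite normE lecR. Qed.

Lemma rnormD u v : rnorm (u + v) <= rnorm u + rnorm v.
Proof. by have := ler_normD u v; rewrite !normE -rmorphD lecR. Qed.

Lemma rnormN v : rnorm (- v) = rnorm v.
Proof. by rewrite /rnorm normrN. Qed.

Lemma rnormMn v n : rnorm (v *+ n) = rnorm v *+ n.
Proof. by rewrite /rnorm normrMn raddfMn. Qed.

Lemma rnormZ (r : R) v : rnorm (r%:C%C *: v) = `|r| * rnorm v.
Proof.
have normCr : `|r%:C%C| = `|r|%:C%C.
  by rewrite normc_def /= expr0n /= addr0 sqrtr_sqr.
by rewrite /rnorm normrZ normCr normE -rmorphM.
Qed.

Lemma eq0_of_rnorm_le_cvg0 v (b : nat -> R) :
  (forall k, rnorm v <= b k) -> b @ \oo --> 0 -> v = 0.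
Proof.
move=> vb b0; have vle0 : rnorm v <= 0.
  by apply: (ler_cvg_to (cvg_cst _) b0); apply: nearW.
have v0 : rnorm v = 0 by apply/le_anti; rewrite vle0 rnorm_ge0.
by apply/eqP; rewrite -normr_eq0 normE v0.
Qed.

End ComplexNormedModule.

Lemma four_expC (R : realType) k :
  ((4 : R) ^+ k)%:C%C = (2 : R[i]) ^+ k * (2 : R[i]) ^+ k.
Proof. by rewrite -exprMn rmorphXn rmorph_nat -natrM. Qed.

Lemma four_expCV (R : realType) k :
  (((4 : R) ^+ k)^-1)%:C%C = ((2 : R[i]) ^+ k * (2 : R[i]) ^+ k)^-1.
Proof. by rewrite -four_expC; exact: fmorphV. Qed.

Section HyersUlamStability.
Variables (R : realType) (n0 : nat) (X : banachAlgType R[i]).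
Variables (phi psi : X -> X -> R) (f : X -> X) (L : R).
Hypothesis n0_gt0 : (0 < n0)%N.
Hypothesis f0 : f 0 = 0.
Hypothesis f_triple_approx : forall x y : X,
  `|f (x ** y ** x) - f x ** y ** x - x ** f y ** x - x ** y ** f x|
    <= (psi x y)%:C%C.
Hypothesis f_jensen_approx : forall (x y : X) (mu : R[i]), mu \in @circle_arc R n0 ->
  `|f ((2 * mu) *: x + mu *: y) + f (mu *: x + (2 * mu) *: y)
    - mu *: (f (3 *: x) + f (3 *: y))| <= (phi x y)%:C%C.
Hypothesis L_gt0 : 0 < L.
Hypothesis L_lt1 : L < 1.
Hypothesis phi_contract : forall x y : X, phi (2 *: x) (2 *: y) / 2 <= L * phi x y.
Hypothesis psi_lim : forall x y : X,
  (fun k => ((4 : R) ^+ k)^-1 * psi ((2 : R[i]) ^+ k *: x) y) @ \oo --> 0.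

Definition triple_defect x y :=
  f (x ** y ** x) - f x ** y ** x - x ** f y ** x - x ** y ** f x.

Definition jensen_defect x y :=
  f (x + x + y) + f (x + y + y) - f (x + x + x) - f (y + y + y).

Lemma phi_dilate_le n x y :
  phi ((2 : R[i]) ^+ n *: x) ((2 : R[i]) ^+ n *: y) <= (2 * L) ^+ n * phi x y.
Proof.
elim: n x y => [|n IHn] x y; first by rewrite !expr0 !scale1r mul1r.
have := phi_contract ((2 : R[i]) ^+ n *: x) ((2 : R[i]) ^+ n *: y).
rewrite ler_pdivrMr // !exprS -!scalerA => phi_le.
apply: le_trans phi_le _; rewrite [L * _ * 2]mulrC mulrA -[X in _ <= X]mulrA.
by rewrite ler_pM2l ?mulr_gt0 //; exact: IHn.
Qed.

Lemma one_in_arc : (1 : R[i]) \in @circle_arc R n0.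
Proof.
rewrite inE; exists 0; rewrite cos0 sin0; split => //.
by rewrite lexx /= divr_ge0 // mulr_ge0 // pi_ge0.
Qed.

Lemma jensen_defect_le x y : rnorm (jensen_defect x y) <= phi x y.
Proof.
apply: rnorm_le; have := f_jensen_approx x y one_in_arc.
rewrite mulr1 !scale1r !scaler_nat !mulrSr !mulr0n !add0r !addrA.
by congr (_ <= _); congr `|_|; rewrite /jensen_defect; abel.
Qed.

(* [f] is approximated by [z |-> 4^-k f (4^k z) - c z - z c] with
   [c := 2^-k f (2^k 1)]; the error is [4^-k] times a triple defect. *)
Definition quad_center k := ((2 : R[i]) ^+ k)^-1 *: f ((2 : R[i]) ^+ k *: baone).

Definition quad_approx k z :=
  (((4 : R) ^+ k)^-1)%:C%C *: f (((4 : R) ^+ k)%:C%C *: z)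
  - quad_center k ** z - z ** quad_center k.

Lemma quad_approx_err k z :
  f z - quad_approx k z =
  - ((((4 : R) ^+ k)^-1)%:C%C *: triple_defect ((2 : R[i]) ^+ k *: baone) z).
Proof.
rewrite -scaleNr /quad_approx /quad_center /triple_defect; set s := (2 : R[i]) ^+ k.
have s_neq0 : s != 0 by rewrite expf_neq0 // pnatr_eq0.
have four_k : ((4 : R) ^+ k)%:C%C = s * s := four_expC R k.
have four_kV : (((4 : R) ^+ k)^-1)%:C%C = (s * s)^-1 := four_expCV R k.
have ss_s : (s * s)^-1 * s = s^-1 by rewrite invfM -mulrA mulVf ?mulr1.
have ss_ss : (s * s)^-1 * (s * s) = 1 by rewrite mulVf ?mulf_neq0.
rewrite four_k four_kV !(bamulZl, bamulZr, bamul1l, bamul1r) !scalerA.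
by rewrite !scalerDr !scalerN !scalerA !mulNr ss_s ss_ss !scaleNr scale1r; abel.
Qed.

Lemma quad_approx_le k z :
  rnorm (f z - quad_approx k z)
    <= ((4 : R) ^+ k)^-1 * psi ((2 : R[i]) ^+ k *: baone) z.
Proof.
rewrite quad_approx_err rnormN rnormZ ger0_norm ?invr_ge0 ?exprn_ge0 //.
apply: ler_wpM2l; [by rewrite invr_ge0 exprn_ge0 | exact: rnorm_le (f_triple_approx _ _)].
Qed.

Lemma phi_dilate4_le k x y :
  phi (((4 : R) ^+ k)%:C%C *: x) (((4 : R) ^+ k)%:C%C *: y)
    <= (4 : R) ^+ k * (phi x y * (L ^+ 2) ^+ k).
Proof.
have four_k : ((4 : R) ^+ k)%:C%C = (2 : R[i]) ^+ (2 * k).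
  by rewrite rmorphXn rmorph_nat exprM expr2 -natrM.
rewrite four_k; apply: le_trans (phi_dilate_le _ _ _) _.
have sq2L : (2 * L) ^+ 2 = 4 * L ^+ 2 by rewrite exprMn -natrX.
by rewrite [X in _ <= X]mulrCA -exprMn -sq2L -exprM mulrC.
Qed.

Lemma jensen_defect_eq0 x y : jensen_defect x y = 0.
Proof.
pose err k z := ((4 : R) ^+ k)^-1 * psi ((2 : R[i]) ^+ k *: baone) z.
pose a := x + x + y; pose b := x + y + y; pose c := x + x + x; pose d := y + y + y.
apply: (@eq0_of_rnorm_le_cvg0 _ _ _ (fun k => phi x y * (L ^+ 2) ^+ k
  + (err k a + err k b + err k c + err k d))); last first.
  have err0 z : err ^~ z @ \oo --> 0 := psi_lim _ _.
  have L2_lt1 : `|L ^+ 2| < 1 by rewrite ger0_norm ?exprn_ge0 ?ltW // expr_lt1 ?ltW.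
  have := cvgD (cvg_geometric (phi x y) L2_lt1) (cvgD (cvgD (cvgD (err0 a) (err0 b)) (err0 c)) (err0 d)).
  by rewrite !addr0; apply.
move=> k; set q := (4 : R) ^+ k.
have q_gt0 : 0 < q by rewrite exprn_gt0.
have -> : jensen_defect x y = (q^-1)%:C%C *: jensen_defect (q%:C%C *: x) (q%:C%C *: y)
    + ((f a - quad_approx k a) + (f b - quad_approx k b)
       - (f c - quad_approx k c) - (f d - quad_approx k d)).
  rewrite /jensen_defect /quad_approx /a /b /c /d !scalerDr; bamul_expand.
  by rewrite ?scalerDr ?scalerN; abel.
apply: le_trans (rnormD _ _) _; apply: lerD.
  rewrite rnormZ ger0_norm ?invr_ge0 ?(ltW q_gt0) // ler_pdivrMl //.
  exact: le_trans (jensen_defect_le _ _) (phi_dilate4_le _ _ _).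
have ea := quad_approx_le k a; have eb := quad_approx_le k b.
have ec := quad_approx_le k c; have ed := quad_approx_le k d.
have t1 := rnormD (f a - quad_approx k a + (f b - quad_approx k b) - (f c - quad_approx k c))
                  (- (f d - quad_approx k d)).
have t2 := rnormD (f a - quad_approx k a + (f b - quad_approx k b)) (- (f c - quad_approx k c)).
have t3 := rnormD (f a - quad_approx k a) (f b - quad_approx k b).
rewrite !rnormN in t1 t2; rewrite /err; lra.
Qed.

Lemma jensen_exact x y :
  f (x + x + y) + f (x + y + y) = f (x + x + x) + f (y + y + y).
Proof. by apply/eqP; rewrite -subr_eq0 opprD addrA; apply/eqP; exact: jensen_defect_eq0. Qed.

Lemma f_additive x y : f (x + y) = f x + f y.
Proof. exact: jensenD f0 jensen_exact x y. Qed.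

Lemma f_scale_arc mu x : mu \in @circle_arc R n0 -> f (mu *: x) = mu *: f x.
Proof.
move=> mu_arc; apply/eqP; rewrite -subr_eq0; apply/eqP.
set w := f (mu *: x) - mu *: f x.
apply: (@eq0_of_rnorm_le_cvg0 _ _ _ (fun k => phi x 0 * L ^+ k)); last first.
  by apply: cvg_geometric; rewrite ger0_norm ?ltW.
move=> k.
have := le_trans (rnorm_le (f_jensen_approx ((2 : R[i]) ^+ k *: x)
                              ((2 : R[i]) ^+ k *: 0) mu_arc)) (phi_dilate_le k x 0).
rewrite !scaler0 !addr0 f0 addr0 -natrX; set s := (2 ^ k)%N.
have e1 : (2 * mu) *: (s%:R *: x) = (2 * s)%:R *: (mu *: x).
  by rewrite !scalerA natrM mulrAC mulrC.
have e2 : mu *: (s%:R *: x) = s%:R *: (mu *: x) by rewrite !scalerA mulrC.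
have e3 : (3 : R[i]) *: (s%:R *: x) = (3 * s)%:R *: x by rewrite scalerA natrM.
have e4 : (2 * s + s = 3 * s)%N by rewrite addnC -mulSn.
rewrite e1 e2 e3 !(homogeneous_nat f_additive) !scaler_nat -scalerMnr -mulrnDr e4 -mulrnBl -/w.
rewrite rnormMn -[rnorm w *+ _]mulr_natr natrM /s natrX exprMn.
have -> : rnorm w * (3 * 2 ^+ k) = 2 ^+ k * (3 * rnorm w) by ring.
rewrite -mulrA ler_pM2l ?exprn_gt0 // mulrC.
have := rnorm_ge0 w; lra.
Qed.

Lemma f_scalable (a : R[i]) x : f (a *: x) = a *: f x.
Proof. exact: homogeneous n0_gt0 f_additive f_scale_arc a x. Qed.

Lemma triple_defectZ (a : R[i]) x y :
  triple_defect (a *: x) y = (a * a) *: triple_defect x y.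
Proof.
by rewrite /triple_defect !(bamulZl, bamulZr, f_scalable) !scalerA !scalerBr.
Qed.

Lemma triple_defect_eq0 x y : triple_defect x y = 0.
Proof.
apply: (eq0_of_rnorm_le_cvg0 _ (psi_lim x y)) => k.
have -> : triple_defect x y
    = (((4 : R) ^+ k)^-1)%:C%C *: triple_defect ((2 : R[i]) ^+ k *: x) y.
  by rewrite triple_defectZ scalerA four_expCV mulVf ?scale1r.
rewrite rnormZ ger0_norm ?invr_ge0 ?exprn_ge0 //.
by apply: ler_wpM2l; [rewrite invr_ge0 exprn_ge0 | exact: rnorm_le (f_triple_approx _ _)].
Qed.

Lemma f_jordan_triple x y :
  f (x ** y ** x) = f x ** y ** x + x ** f y ** x + x ** y ** f x.
Proof. by apply/eqP; rewrite -subr_eq0 !opprD !addrA; apply/eqP; exact: triple_defect_eq0. Qed.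

End HyersUlamStability.

Theorem theorem2p10 (R : realType) (n0 : nat) (X : banachAlgType R[i])
    (phi psi : X -> X -> R) (f : X -> X) (L : R) :
  (0 < n0)%N ->
  semiprime X ->
  (forall x y, 0 <= phi x y) ->
  (forall x y, 0 <= psi x y) ->
  f 0 = 0 ->
  (forall x y : X,
     `|f (x ** y ** x) - f x ** y ** x - x ** f y ** x - x ** y ** f x|
       <= (psi x y)%:C%C) ->
  (forall (x y : X) (mu : R[i]), mu \in @circle_arc R n0 ->
     `|f ((2 * mu) *: x + mu *: y) + f (mu *: x + (2 * mu) *: y)
        - mu *: (f (3 *: x) + f (3 *: y))| <= (phi x y)%:C%C) ->
  0 < L < 1 ->
  (forall x y : X, phi (2 *: x) (2 *: y) / 2 <= L * phi x y) ->
  (forall x y : X,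
     (fun k : nat => ((8 : R) ^+ k)^-1 *
                     psi ((2 : R[i]) ^+ k *: x) ((2 : R[i]) ^+ k *: y))
       @ \oo --> (0 : R)) ->
  (forall x y : X,
     (fun k : nat => ((4 : R) ^+ k)^-1 * psi ((2 : R[i]) ^+ k *: x) y)
       @ \oo --> (0 : R)) ->
  linear_derivation f.
Proof.
move=> n0_gt0 sp _ _ f0 f_triple f_jensen /andP[L_gt0 L_lt1] phi_contract _ psi_lim.
have fD := f_additive f0 f_triple f_jensen L_gt0 L_lt1 phi_contract psi_lim.
have fZ := f_scalable n0_gt0 f0 f_triple f_jensen L_gt0 L_lt1 phi_contract psi_lim.
split=> [a x y|]; first by rewrite fD fZ.
apply: jordan_triple_derivation sp fD _.
exact: f_jordan_triple n0_gt0 f0 f_triple f_jensen L_gt0 L_lt1 phi_contract psi_lim.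
Qed.
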